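(* Let $n \ge 4$ be even, let $s = n/2$ and $m = n/s = 2$. There exists a nonsingular matrix $A \in \mathbb{Q}^{n\times n}$ with $n$ distinct eigenvalues such that for every $v \in \mathbb{Q}^{n\times s}$ of the block-diagonal sparse form $$v = \begin{bmatrix} \ast & & & \\ & \ast & & \\ & & \ddots & \\ & & & \ast \end{bmatrix},$$ where each $\ast$ is an arbitrary $m\times 1 = 2\times 1$ column and all other entries are zero, the matrix $\mathcal{K}(A,v)$ is singular. For instance, for $n=4$ one may take $$A = \begin{bmatrix} 3&0&0&0\\ 0&5&-1&0\\ 0&4&10&0\\ 0&0&0&12\end{bmatrix},$$ for which $\mathcal{K}(A,v)$ is singular for all $v = \begin{bmatrix} a_1 & 0\\ a_2 & 0\\ 0 & b_1\\ 0 & b_2\end{bmatrix}$.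
   Context: For a field $F$, a matrix $A \in F^{n\times n}$, a divisor $s$ of $n$ and $m = n/s$, and a block $v \in F^{n\times s}$, define the block Krylov matrix $\mathcal{K}(A,v) := [\, v \mid Av \mid A^2 v \mid \cdots \mid A^{m-1}v \,] \in F^{n\times n}$. *)

From HB Require Import structures.
From mathcomp Require Import all_boot all_order all_algebra all_field.
Set Implicit Arguments. Unset Strict Implicit. Unset Printing Implicit Defensive.
Import GRing.Theory.
Local Open Scope ring_scope.

Lemma krylov_width (m s : nat) : (\sum_(k < m) s)%N = (m * s)%N.
Proof. by rewrite big_const_ord iter_addn_0 mulnC. Qed.

Definition krylov_mx (F : pzRingType) (n s m : nat)
  (A : 'M[F]_n) (v : 'M[F]_(n, s)) : 'M[F]_(n, m * s) :=
  castmx (erefl n, krylov_width m s) (mxrow (fun k : 'I_m => A ^+ k *m v)).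

Definition block_diag_sparse (F : pzRingType) (m s : nat) (v : 'M[F]_(m * s, s)) : Prop :=
  forall (i : 'I_(m * s)) (j : 'I_s), (i %/ m)%N != j -> v i j = 0.

From HB Require Import structures.
From mathcomp Require Import all_boot all_order all_algebra all_field.
From mathcomp Require Import zify ring.
Set Implicit Arguments.
Unset Strict Implicit.
Unset Printing Implicit Defensive.

Local Open Scope ring_scope.
Import GRing.Theory Num.Theory.

(* A is diag(3, 6, 9, ...) except that rows and columns 1, 2 carry the block
   [[5, -1], [4, 10]], whose eigenvalues are 6 and 9.  Hence A has the n distinct
   eigenvalues 3(i+1); they exhaust its spectrum, so 0 is not an eigenvalue and A
   is invertible.  For a block-sparse v the first two columns are
   v_0 = a e_0 + b e_1 and v_1 = c e_2 + d e_3, and with w = e_1 + 2 e_2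
   we get (A - 3) v_0 = 2b w and (A - 12) v_1 = -c w.  A linear dependency between
   these two vectors is one between the columns v_0, A v_0, v_1, A v_1 of K(A, v). *)

Lemma det_eq0_mulmx_col (F : fieldType) n (K : 'M[F]_n) (x : 'cV_n) :
  x != 0 -> K *m x = 0 -> \det K = 0.
Proof.
move=> nz_x Kx0; rewrite -det_tr; apply/eqP/det0P.
by exists x^T; rewrite ?trmx_eq0 // -trmx_mul Kx0 trmx0.
Qed.

Lemma unitmx_eigenvalue0 (F : fieldType) n (A : 'M[F]_n) :
  (A \in unitmx) = ~~ eigenvalue A 0.
Proof.
rewrite unitmxE unitfE; congr negb.
by apply/det0P/eigenvalueP => [[u nz_u uA0] | [u uA0 nz_u]]; exists u;
  rewrite // uA0 scale0r.
Qed.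

Lemma eigenvalue_codom (F : fieldType) n (A : 'M[F]_n) (e : 'I_n -> F) :
  injective e -> (forall i, eigenvalue A (e i)) -> {subset eigenvalue A <= codom e}.
Proof.
move=> inj_e eig_e a eig_a; apply: contraT => e'a.
suff: (size (a :: codom e) < size (char_poly A))%N.
  by rewrite size_char_poly /= size_codom card_ord ltnn.
apply: max_poly_roots.
- by rewrite monic_neq0 ?char_poly_monic.
- by apply/allP => _ /predU1P[-> | /codomP[i ->]]; rewrite -eigenvalue_root_char.
- by rewrite /= e'a codomE (map_inj_uniq inj_e) enum_uniq.
Qed.

Definition counterexample_entry (i j : nat) : int :=
  match i, j with
  | 1, 1 => 5 | 1, 2 => -1
  | 2, 1 => 4 | 2, 2 => 10
  | _, _ => if i == j then (3 * i.+1)%:Z else 0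
  end.

Definition counterexample_mx (R : pzRingType) n : 'M[R]_n :=
  \matrix_(i, j) (counterexample_entry i j)%:~R.

Section CounterexampleMx.
Variables (F : numFieldType) (n : nat) (n_gt2 : (2 < n)%N).
Local Notation A := (counterexample_mx F n).

Definition ord_one : 'I_n := Ordinal (ltnW n_gt2).
Definition ord_two : 'I_n := Ordinal n_gt2.
Local Notation "''e_' i" := (delta_mx 0 i : 'rV[F]_n) (at level 8, i at level 2).
Local Notation "''e^' i" := (delta_mx i 0 : 'cV[F]_n) (at level 8, i at level 2).

Lemma row_counterexample_mx (i : 'I_n) : i != 1%N :> nat -> i != 2%N :> nat ->
  row i A = (3 * i.+1)%:R *: 'e_i.
Proof.
move=> i1 i2; apply/rowP => j; rewrite !mxE eqxx -val_eqE /=.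
case: i i1 i2 => [[|[|[|i]]] ?] //= _ _; case: j => [[|[|[|j]]] ?] /=;
  rewrite ?mulr0 ?mulr1 //.
have [->|/negbTE ij] := eqVneq i j; by rewrite ?eqxx ?mulr1 // !eqSS ij eq_sym ij mulr0.
Qed.

Lemma row_counterexample_mx1 : row ord_one A = 5%:R *: 'e_ord_one - 'e_ord_two.
Proof.
apply/rowP => j; rewrite !mxE -!val_eqE /=.
by case: j => [[|[|[|j]]] ?] /=; rewrite ?mulr0 ?mulr1 ?subr0 ?sub0r.
Qed.

Lemma row_counterexample_mx2 : row ord_two A = 4%:R *: 'e_ord_one + 10%:R *: 'e_ord_two.
Proof.
apply/rowP => j; rewrite !mxE -!val_eqE /=.
by case: j => [[|[|[|j]]] ?] /=; rewrite ?mulr0 ?mulr1 ?addr0 ?add0r.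
Qed.

Lemma col_counterexample_mx (j : 'I_n) : j != 1%N :> nat -> j != 2%N :> nat ->
  col j A = (3 * j.+1)%:R *: 'e^j.
Proof.
move=> j1 j2; apply/colP => i; rewrite !mxE eqxx andbT -val_eqE /=.
case: j j1 j2 => [[|[|[|j]]] ?] //= _ _; case: i => [[|[|[|i]]] ?] /=;
  rewrite ?mulr0 ?mulr1 //.
have [->|/negbTE ij] := eqVneq i j; by rewrite ?eqxx ?mulr1 // !eqSS ij mulr0.
Qed.

Lemma col_counterexample_mx1 : col ord_one A = 5%:R *: 'e^ord_one + 4%:R *: 'e^ord_two.
Proof.
apply/colP => i; rewrite !mxE -!val_eqE /=.
by case: i => [[|[|[|i]]] ?] /=; rewrite ?mulr0 ?mulr1 ?addr0 ?add0r.
Qed.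

Lemma col_counterexample_mx2 : col ord_two A = - 'e^ord_one + 10%:R *: 'e^ord_two.
Proof.
apply/colP => i; rewrite !mxE -!val_eqE /=.
by case: i => [[|[|[|i]]] ?] /=; rewrite ?mulr0 ?mulr1 ?oppr0 ?addr0 ?add0r.
Qed.

Lemma eigenvalue_counterexample_mx (i : 'I_n) : eigenvalue A (3 * i.+1)%:R.
Proof.
apply/eigenvalueP.
have [i1|i_neq1] := eqVneq (i : nat) 1%N.
  exists (4%:R *: 'e_ord_one + 'e_ord_two).
    rewrite mulmxDl -scalemxAl -!rowE row_counterexample_mx1 row_counterexample_mx2 i1.
    by apply/rowP => j; rewrite !mxE; ring.
  by apply/eqP => /rowP/(_ ord_two); rewrite !mxE /= mulr0 add0r; apply/eqP; rewrite oner_eq0.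
have [i2|i_neq2] := eqVneq (i : nat) 2%N.
  exists ('e_ord_one + 'e_ord_two).
    rewrite mulmxDl -!rowE row_counterexample_mx1 row_counterexample_mx2 i2.
    by apply/rowP => j; rewrite !mxE; ring.
  by apply/eqP => /rowP/(_ ord_two); rewrite !mxE /= add0r; apply/eqP; rewrite oner_eq0.
exists 'e_i; first by rewrite -rowE row_counterexample_mx.
by apply/eqP => /rowP/(_ i); rewrite !mxE !eqxx; apply/eqP; rewrite oner_eq0.
Qed.

Lemma counterexample_spectrum_inj : injective (fun i : 'I_n => (3 * i.+1)%:R : F).
Proof. by move=> i j /eqP; rewrite eqr_nat eqn_pmul2l // eqSS => /eqP/val_inj. Qed.

Lemma counterexample_mx_unit : A \in unitmx.
Proof.
rewrite unitmx_eigenvalue0; apply/negP.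
move/(eigenvalue_codom counterexample_spectrum_inj eigenvalue_counterexample_mx).
by case/codomP => i /eqP; rewrite eq_sym pnatr_eq0.
Qed.

End CounterexampleMx.

Definition krylov_idx m s (k : 'I_m) (j : 'I_s) : 'I_(m * s) :=
  cast_ord (krylov_width m s) (tagnat.Rank (p_ := fun=> s) k j).

Lemma krylov_idx_eq m s (k k' : 'I_m) (j j' : 'I_s) :
  (krylov_idx k j == krylov_idx k' j') = (k == k') && (j == j').
Proof. by rewrite -val_eqE /= tagnat.eq_Rank. Qed.

Lemma krylov_mx_delta (R : pzRingType) n m s (A : 'M[R]_n) (v : 'M_(n, s)) k j :
  krylov_mx m A v *m delta_mx (krylov_idx k j) 0 = A ^+ k *m col j v.
Proof.
rewrite -colE (colE j v) mulmxA -colE; apply/colP => i.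
rewrite [LHS]mxE [RHS]mxE castmxE /= cast_ord_id /krylov_idx cast_ordK mxE.
have -> : tagnat.sig2 (tagnat.Rank (p_ := fun=> s) k j) = j.
  by apply: val_inj; rewrite tagnat.Rank2K.
by rewrite tagnat.Rank1K.
Qed.

Lemma krylov2_det_eq0 (F : fieldType) s (A : 'M[F]_(2 * s)) (v : 'M_(2 * s, s))
    (j j' : 'I_s) (a a' c c' : F) :
  j != j' -> (c != 0) || (c' != 0) ->
  c *: ((A - a%:M) *m col j v) + c' *: ((A - a'%:M) *m col j' v) = 0 ->
  \det (krylov_mx 2 A v) = 0.
Proof.
move=> neq_jj' nz_cc' dep.
pose x j a : 'cV[F]_(2 * s) :=
  delta_mx (krylov_idx ord_max j) 0 - a *: delta_mx (krylov_idx ord0 j) 0.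
have Kx i b : krylov_mx 2 A v *m x i b = (A - b%:M) *m col i v.
  by rewrite mulmxBr -scalemxAr !krylov_mx_delta mulmxBl mul_scalar_mx mul1mx.
apply: (@det_eq0_mulmx_col _ _ _ (c *: x j a + c' *: x j' a')).
  apply: contraTneq nz_cc' => /colP x0.
  have := x0 (krylov_idx ord_max j); have := x0 (krylov_idx ord_max j').
  rewrite !mxE !krylov_idx_eq !eqxx (negPf neq_jj') eq_sym (negPf neq_jj') /=.
  by rewrite !(mulr0, mulr1, subr0, oppr0, addr0, add0r) => -> ->; rewrite eqxx.
by rewrite mulmxDr -!scalemxAr !Kx.
Qed.

Lemma col_supp2 (R : pzRingType) m n (M : 'M[R]_(m, n)) j (p q : 'I_m) : p != q ->
    (forall k, k != p -> k != q -> M k j = 0) ->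
  col j M = M p j *: delta_mx p 0 + M q j *: delta_mx q 0.
Proof.
move=> neq_pq M0; apply/colP => i; rewrite !mxE.
have [->|i_neq_p] := eqVneq i p; first by rewrite (negPf neq_pq) mulr1 mulr0 addr0.
have [->|i_neq_q] := eqVneq i q; first by rewrite mulr0 mulr1 add0r.
by rewrite !mulr0 addr0 M0.
Qed.

Section CounterexampleKrylov.
Variables (F : numFieldType) (s : nat) (s_gt1 : (1 < s)%N).
Local Notation A := (counterexample_mx F (2 * s)).
Local Notation "''e^' i" := (delta_mx i 0 : 'cV[F]_(2 * s)) (at level 8, i at level 2).

Lemma counterexample_krylov_det_eq0 (v : 'M[F]_(2 * s, s)) :
  block_diag_sparse v -> \det (krylov_mx 2 A v) = 0.
Proof.
move=> v_sparse.
have n_gt3 : (3 < 2 * s)%N by lia.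
have n_gt2 := ltnW n_gt3.
pose i0 : 'I_(2 * s) := Ordinal (ltnW (ltnW n_gt2)).
pose i1 := ord_one n_gt2; pose i2 := ord_two n_gt2.
pose i3 : 'I_(2 * s) := Ordinal n_gt3.
pose j0 : 'I_s := Ordinal (ltnW s_gt1); pose j1 : 'I_s := Ordinal s_gt1.
have v_j0 : col j0 v = v i0 j0 *: 'e^i0 + v i1 j0 *: 'e^i1.
  apply: col_supp2 => // k; rewrite -!val_eqE /= => k0 k1.
  by apply: v_sparse => /=; lia.
have v_j1 : col j1 v = v i2 j1 *: 'e^i2 + v i3 j1 *: 'e^i3.
  apply: col_supp2 => // k; rewrite -!val_eqE /= => k2 k3.
  by apply: v_sparse => /=; lia.
pose w := 'e^i1 + 2%:R *: 'e^i2.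
have Av_j0 : (A - 3%:M) *m col j0 v = (2%:R * v i1 j0) *: w.
  rewrite v_j0 mulmxDr -!scalemxAr !mulmxBl !mul_scalar_mx -!colE.
  rewrite (@col_counterexample_mx F _ i0) // (col_counterexample_mx1 _ n_gt2).
  by apply/colP => k; rewrite !mxE /i0 /i1 /i2 /=; ring.
have Av_j1 : (A - 12%:M) *m col j1 v = - v i2 j1 *: w.
  rewrite v_j1 mulmxDr -!scalemxAr !mulmxBl !mul_scalar_mx -!colE.
  rewrite (@col_counterexample_mx F _ i3) // (col_counterexample_mx2 _ n_gt2).
  by apply/colP => k; rewrite !mxE /i1 /i2 /i3 /=; ring.
have j0_neq_j1 : j0 != j1 by rewrite -val_eqE.
have [b0|b_nz] := eqVneq (v i1 j0) 0.
  apply: (krylov2_det_eq0 (a := 3) (a' := 12) (c := 1) (c' := 0) j0_neq_j1); first by rewrite oner_eq0.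
  by rewrite Av_j0 b0 mulr0 !scale0r scaler0 addr0.
apply: (krylov2_det_eq0 (a := 3) (a' := 12) (c := v i2 j1) (c' := 2%:R * v i1 j0) j0_neq_j1).
  by rewrite mulf_neq0 ?orbT // pnatr_eq0.
rewrite Av_j0 Av_j1 !scalerA; apply/eqP; rewrite -scalerDl scaler_eq0; apply/orP; left.
by apply/eqP; ring.
Qed.

End CounterexampleKrylov.

Theorem mainTheorem1 (s : nat) (hs : (2 <= s)%N) :
  exists A : 'M[rat]_(2 * s),
    [/\ A \in unitmx,
        (exists e : 'I_(2 * s) -> algC,
            injective e /\ forall i, eigenvalue (map_mx ratr A) (e i))
      & forall v : 'M[rat]_(2 * s, s),
          block_diag_sparse v -> \det (krylov_mx 2 A v) = 0].
Proof.
have n_gt2 : (2 < 2 * s)%N by lia.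
exists (counterexample_mx rat (2 * s)); split.
- exact: counterexample_mx_unit.
- exists (fun i => ratr (3 * i.+1)%:R); split.
    by move=> i j /fmorph_inj; apply: counterexample_spectrum_inj.
  by move=> i; rewrite eigenvalue_map; apply: eigenvalue_counterexample_mx.
- exact: counterexample_krylov_det_eq0.
Qed.
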